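(* Let $f_1,\dots,f_m\in\mathbb{C}[x_1,\dots,x_n]$ and consider an action-matrix solver for the action polynomial $f=x_1$, given by the data described in the context: the basis monomials $B_a=\{\mathbf{x}^{\alpha_1},\dots,\mathbf{x}^{\alpha_r}\}$, the reducible monomials $B_r$, the reduced excess monomials $\hat B_e$, the elimination template $\hat{\mathbf{C}}=\begin{bmatrix}\hat{\mathbf{C}}_{11}&\mathbf{C}_{12}&\mathbf{C}_{13}\\ \hat{\mathbf{C}}_{21}&\mathbf{C}_{22}&\mathbf{C}_{23}\end{bmatrix}$ with Gauss–Jordan form $\begin{bmatrix}\mathbf{I}&\mathbf{0}&\hat{\mathbf{C}}'_{13}\\ \mathbf{0}&\mathbf{I}&\mathbf{C}'_{23}\end{bmatrix}$, and the action matrix $\mathbf{M}_f$. Construct the sparse resultant matrix $$\mathbf{M}(u_0)=\begin{bmatrix}\mathbf{A}_{11}&\mathbf{A}_{12}\\ \mathbf{A}_{21}-u_0\mathbf{I}&\mathbf{A}_{22}\end{bmatrix},\qquad \mathbf{A}_{11}=\begin{bmatrix}\mathbf{C}_{13}\\ \mathbf{C}_{23}\end{bmatrix},\quad \mathbf{A}_{12}=\begin{bmatrix}\hat{\mathbf{C}}_{11}&\mathbf{C}_{12}\\ \hat{\mathbf{C}}_{21}&\mathbf{C}_{22}\end{bmatrix},$$ with columns indexed by $\mathbf{b}_1=\mathbf{b}_a$ followed by $\mathbf{b}_2=(\hat{\mathbf{b}}_e,\mathbf{b}_r)$, where the $j$-th row of the lower block $\begin{bmatrix}\mathbf{A}_{21}-u_0\mathbf{I}&\mathbf{A}_{22}\end{bmatrix}$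 is the coefficient vector, with respect to $(\mathbf{b}_1,\mathbf{b}_2)$, of the polynomial $\mathbf{x}^{\alpha_j}(x_1-u_0)$ (here $\mathbf{A}_{21}$ and $\mathbf{A}_{22}$ are $0/1$ matrices), and let $\mathbf{X}=\mathbf{A}_{21}-\mathbf{A}_{22}\mathbf{A}_{12}^{-1}\mathbf{A}_{11}$ be the Schur complement. Then the action-matrix solver and this sparse-resultant solver are equivalent: $\mathbf{X}=\mathbf{M}_f$, and the Gauss–Jordan elimination of $\hat{\mathbf{C}}$ can be replaced by the product $\mathbf{A}_{12}^{-1}\mathbf{A}_{11}$, namely $\mathbf{A}_{12}^{-1}\mathbf{A}_{11}=\begin{bmatrix}\hat{\mathbf{C}}'_{13}\\ \mathbf{C}'_{23}\end{bmatrix}$ (and $\hat{\mathbf{C}}$ has the same size as the upper block $\begin{bmatrix}\mathbf{A}_{11}&\mathbf{A}_{12}\end{bmatrix}$).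
   Context: Action-matrix solver data: $B_a=\{\mathbf{x}^{\alpha_1},\dots,\mathbf{x}^{\alpha_r}\}$ is a set of monomials whose cosets form a linear basis of the quotient ring $\mathbb{C}[x_1,\dots,x_n]/\langle f_1,\dots,f_m\rangle$; $B_r=\{x_1\mathbf{x}^{\alpha}\mid \mathbf{x}^{\alpha}\in B_a\}\setminus B_a$; monomial multiple sets $T_1,\dots,T_m$ give the extended system $\{t f_i : t\in T_i\}$, whose monomials are split as $B_e\sqcup B_r\sqcup B_a$; $\hat B_e\subseteq B_e$ is obtained by deleting excess monomials whose columns are linearly dependent. The elimination template $\hat{\mathbf{C}}$ is the coefficient matrix of the extended system with columns indexed by the ordered vectors $\hat{\mathbf{b}}_e,\mathbf{b}_r,\mathbf{b}_a$ of $\hat B_e,B_r,B_a$ (column blocks as displayed), rows partitioned so that $\mathbf{C}_{22}$ is square invertible, and such that $\begin{bmatrix}\hat{\mathbf{C}}_{11}&\mathbf{C}_{12}\\ \hat{\mathbf{C}}_{21}&\mathbf{C}_{22}\end{bmatrix}$ is square invertible, so its Gauss–Jordan form is $\begin{bmatrix}\mathbf{I}&\mathbf{0}&\hat{\mathbf{C}}'_{13}\\ \mathbf{0}&\mathbf{I}&\mathbf{C}'_{23}\end{bmatrix}$, the rows of $\mathbf{C}'_{23}$ being indexed by the monomials of $\mathbf{b}_r$. The $r\times r$ action matrix $\mathbf{M}_f$ ($f=x_1$) is defined row by row: if $x_1\mathbf{x}^{\alpha_j}=\mathbf{x}^{\alpha_i}\in B_a$, its $j$-th row has $1$ in column $i$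 and $0$ elsewhere; otherwise $x_1\mathbf{x}^{\alpha_j}$ is the $i$-th monomial of $\mathbf{b}_r$ and the $j$-th row of $\mathbf{M}_f$ is the $i$-th row of $-\mathbf{C}'_{23}$. *)

From HB Require Import structures.
From mathcomp Require Import all_boot all_order all_algebra.
From mathcomp Require Import mpoly.
Set Implicit Arguments. Unset Strict Implicit. Unset Printing Implicit Defensive.
Import Order.TTheory GRing.Theory.
Local Open Scope ring_scope.

Section ActionMatrixSolver.
Variables (F : fieldType) (n m : nat).
Implicit Types (p : {mpoly F[n]}) (f : 'I_m -> {mpoly F[n]}).

Definition in_ideal f p : Prop :=
  exists g : 'I_m -> {mpoly F[n]}, p = \sum_(i < m) g i * f i.

(* the cosets of the monomials of ba form a linear basis of
   F[x_1..x_n] / < f_1, ..., f_m > *)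
Definition quotient_basis f (ba : seq 'X_{1..n}) : Prop :=
  (forall c : 'I_(size ba) -> F,
      in_ideal f (\sum_(j < size ba) c j *: 'X_[nth mnm0 ba j]) ->
      forall j, c j = 0)
  /\ (forall p, exists c : 'I_(size ba) -> F,
      in_ideal f (p - \sum_(j < size ba) c j *: 'X_[nth mnm0 ba j])).

Definition mulx1 (i1 : 'I_n) (a : 'X_{1..n}) : 'X_{1..n} := mnm_add (mnm1 i1) a.

Definition is_Br (i1 : 'I_n) (ba br : seq 'X_{1..n}) : Prop :=
  uniq br /\ forall mo, (mo \in br) = has (fun a => mo == mulx1 i1 a) ba && (mo \notin ba).

Definition ext_system f (T : 'I_m -> seq 'X_{1..n}) : seq {mpoly F[n]} :=
  flatten [seq [seq 'X_[t] * f i | t <- T i] | i <- enum 'I_m].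

Definition in_system f T (mo : 'X_{1..n}) : bool :=
  has (fun q => mo \in msupp q) (ext_system f T).

Definition coef_mx (N K : nat) (rows : 'I_N -> {mpoly F[n]}) (cols : seq 'X_{1..n})
  : 'M[F]_(N, K) := \matrix_(k, j) (rows k)@_(nth mnm0 cols j).

Definition action_mx (i1 : 'I_n) (ba br : seq 'X_{1..n}) (sr : nat) (C23' : 'M[F]_(sr, size ba))
  : 'M[F]_(size ba) :=
  \matrix_(j, i)
    let mj := mulx1 i1 (nth mnm0 ba j) in
    if mj \in ba then (index mj ba == i)%:R
    else match [pick k : 'I_sr | nth mnm0 br k == mj] with
         | Some k => - C23' k i
         | None => 0
         end.

Definition lower_block (i1 : 'I_n) (ba bhe br : seq 'X_{1..n}) (u0 : F)
  : 'M[F]_(size ba, size ba + (size bhe + size br)) :=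
  \matrix_(j, c) ('X_[nth mnm0 ba j] * ('X_i1 - u0%:MP))@_(nth mnm0 (ba ++ bhe ++ br) c).

End ActionMatrixSolver.

Arguments action_mx {F n} i1 ba br {sr} C23'.
Arguments coef_mx {F n N} K rows cols.
Arguments lower_block {F n} i1 ba bhe br u0.

From HB Require Import structures.
From mathcomp Require Import all_boot all_order all_algebra.
From mathcomp Require Import mpoly.
Import GRing.Theory.
Local Open Scope ring_scope.

(* Since the monomials of (b1, b2) are distinct, row j of the lower block at
   u0 = 0 is the unit vector of x1 x^alpha_j, and u0 only enters on the
   diagonal of the b1 columns. The Gauss-Jordan form says
   A12^-1 A11 = [C13'; C23'], so row j of the Schur complement is either the
   unit row of x1 x^alpha_j in B_a or minus the row of C23' indexed by
   x1 x^alpha_j in B_r, which is how the action matrix is defined. *)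

Lemma invmx_mul_row_reduced (R : comUnitRingType) (N K : nat)
    (P A : 'M[R]_N) (B X : 'M[R]_(N, K)) :
  P *m row_mx A B = row_mx 1%:M X -> invmx A *m B = X.
Proof.
rewrite mul_mx_row => /eq_row_mx[PA1 <-].
have [_ uA] := mulmx1_unit PA1.
by rewrite -[invmx A]mulmx1 -(mulmx1C PA1) mulmxA mulVmx ?mul1mx.
Qed.

Lemma sum_delta_inj {R : pzSemiRingType} {I : finType} {T : eqType}
    {b : I -> T} (v : I -> R) (k0 : I) :
  injective b -> \sum_k (b k0 == b k)%:R * v k = v k0.
Proof.
move=> inj_b; rewrite (bigD1 k0) //= eqxx mul1r big1 ?addr0 // => k nk0.
by rewrite inj_eq // eq_sym (negbTE nk0) mul0r.
Qed.

Lemma nth_ord_inj (T : eqType) (x0 : T) (s : seq T) (N : nat) :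
  (N <= size s)%N -> uniq s -> injective (fun k : 'I_N => nth x0 s k).
Proof.
move=> le_Ns Us i j /eqP; rewrite nth_uniq ?(leq_trans (ltn_ord _) le_Ns) //.
by move/eqP/val_inj.
Qed.

Lemma mcoeff_mpolyX_mulXsubC (F : fieldType) (n : nat) (i : 'I_n)
    (a mo : 'X_{1..n}) (c : F) :
  ('X_[a] * ('X_i - c%:MP) : {mpoly F[n]})@_mo
  = (mulx1 i a == mo)%:R - c * (a == mo)%:R.
Proof.
rewrite mulrBr mcoeffB -mpolyXD [_ * c%:MP]mulrC mul_mpolyC mcoeffZ !mcoeffX.
by rewrite /mulx1 addmC.
Qed.

Section LowerBlock.
Variables (F : fieldType) (n : nat) (i1 : 'I_n) (ba bhe br : seq 'X_{1..n}).

Local Notation L u0 := (lower_block (F := F) i1 ba bhe br u0).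
Local Notation mj j := (mulx1 i1 (nth mnm0 ba j)).

Lemma lsubmx_lower_blockE u0 j i :
  lsubmx (L u0) j i
  = (mj j == nth mnm0 ba i)%:R - u0 * (nth mnm0 ba j == nth mnm0 ba i)%:R.
Proof. by rewrite !mxE mcoeff_mpolyX_mulXsubC /= nth_cat ltn_ord. Qed.

Lemma rsubmx_lower_blockE u0 j k :
  rsubmx (L u0) j k = (mj j == nth mnm0 (bhe ++ br) k)%:R
                      - u0 * (nth mnm0 ba j == nth mnm0 (bhe ++ br) k)%:R.
Proof.
by rewrite !mxE mcoeff_mpolyX_mulXsubC /= nth_cat ltnNge leq_addr /= addKn.
Qed.

Hypothesis uniq_b : uniq (ba ++ bhe ++ br).

Let uniq_ba : uniq ba. Proof. by move: uniq_b; rewrite cat_uniq => /and3P[]. Qed.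

Let uniq_b2 : uniq (bhe ++ br).
Proof. by move: uniq_b; rewrite cat_uniq => /and3P[]. Qed.

Let ba_notin_b2 mo : mo \in ba -> mo \notin bhe ++ br.
Proof.
move: uniq_b; rewrite cat_uniq => /and3P[_ /hasPn b2_nba _] ba_mo.
by apply/negP => /b2_nba; rewrite ba_mo.
Qed.

Let b2_inj : injective (fun k : 'I_(size bhe + size br) => nth mnm0 (bhe ++ br) k).
Proof. by apply: nth_ord_inj; rewrite ?size_cat. Qed.

Lemma lower_block_shift u0 :
  L u0 = row_mx (lsubmx (L 0) - u0%:M) (rsubmx (L 0)).
Proof.
rewrite -[LHS]hsubmxK; congr row_mx; apply/matrixP => j k.
  rewrite [RHS]mxE !lsubmx_lower_blockE mul0r subr0 nth_uniq //.
  by rewrite !mxE mulrnAr mulr1.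
rewrite !rsubmx_lower_blockE mul0r !subr0.
suff -> : (nth mnm0 ba j == nth mnm0 (bhe ++ br) k) = false by rewrite mulr0 subr0.
apply/negbTE/eqP => e; move: (ba_notin_b2 _ (mem_nth mnm0 (ltn_ord j))).
by rewrite e mem_nth // size_cat.
Qed.

Hypothesis br_def : is_Br i1 ba br.

Lemma schur_lower_block (C13' : 'M[F]_(size bhe, size ba))
    (C23' : 'M[F]_(size br, size ba)) :
  lsubmx (L 0) - rsubmx (L 0) *m col_mx C13' C23' = action_mx i1 ba br C23'.
Proof.
case: br_def => uniq_br Br.
apply/matrixP => j i; rewrite [RHS]mxE /= mxE lsubmx_lower_blockE mul0r subr0 2!mxE.
under eq_bigr => k _ do rewrite rsubmx_lower_blockE mul0r subr0.
case: ifP => [mj_ba | mj_nba].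
  rewrite big1 ?subr0 => [|k _]; last first.
    case: eqP => [e|]; last by rewrite mul0r.
    by move: (ba_notin_b2 _ mj_ba); rewrite e mem_nth // size_cat.
  by rewrite -{1}(nth_index mnm0 mj_ba) nth_uniq // index_mem.
have mj_br : mj j \in br.
  by rewrite Br mj_nba andbT; apply/hasP; exists (nth mnm0 ba j); rewrite ?mem_nth.
have -> : (mj j == nth mnm0 ba i) = false.
  by apply/negbTE/eqP => e; rewrite e mem_nth in mj_nba.
case: pickP => [k /eqP br_k | no_k]; last first.
  have idx_lt : (index (mj j) br < size br)%N by rewrite index_mem.
  by have := no_k (Ordinal idx_lt); rewrite /= nth_index ?eqxx.
have b2_k : nth mnm0 (bhe ++ br) (rshift (size bhe) k) = mj j.
  by rewrite nth_cat /= ltnNge leq_addr addKn.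
by rewrite sub0r -b2_k (sum_delta_inj _ _ b2_inj) col_mxEd.
Qed.

End LowerBlock.

Theorem proposition2 (F : fieldType) (n m : nat) (hn : (0 < n)%N)
  (f : 'I_m -> {mpoly F[n]}) (T : 'I_m -> seq 'X_{1..n})
  (ba br be_hat : seq 'X_{1..n})
  (rowpoly : 'I_(size be_hat + size br) -> {mpoly F[n]})
  (C13' : 'M[F]_(size be_hat, size ba)) (C23' : 'M[F]_(size br, size ba)) :
  let i1 : 'I_n := Ordinal hn in
  let sys := ext_system f T in
  (* B_a is a monomial basis of the quotient ring *)
  uniq ba -> quotient_basis f ba ->
  (* B_r *)
  is_Br i1 ba br ->
  (* monomial sets T_i; the monomials of the system are B_e ⊔ B_r ⊔ B_a *)
  (forall i, uniq (T i)) ->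
  (forall mo, mo \in ba ++ br -> in_system f T mo) ->
  (* \hat B_e ⊆ B_e *)
  uniq be_hat ->
  (forall mo, mo \in be_hat -> [&& in_system f T mo, mo \notin br & mo \notin ba]) ->
  (* the rows of the template enumerate the extended system *)
  perm_eq [seq rowpoly k | k <- enum 'I_(size be_hat + size br)] sys ->
  let Chat : 'M[F]_(size be_hat + size br, (size be_hat + size br) + size ba) :=
    coef_mx ((size be_hat + size br) + size ba) rowpoly (be_hat ++ br ++ ba) in
  let A12 : 'M[F]_(size be_hat + size br) := lsubmx Chat in
  let A11 : 'M[F]_(size be_hat + size br, size ba) := rsubmx Chat in
  (* C22 and [C11 C12; C21 C22] are invertible *)
  drsubmx A12 \in unitmx -> A12 \in unitmx ->
  (* Gauss-Jordan form of Chat is [I 0 C13'; 0 I C23'] *)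
  (exists P : 'M[F]_(size be_hat + size br),
      P \in unitmx /\ P *m Chat = row_mx 1%:M (col_mx C13' C23')) ->
  let A21 : 'M[F]_(size ba) := lsubmx (lower_block i1 ba be_hat br 0) in
  let A22 : 'M[F]_(size ba, size be_hat + size br) :=
    rsubmx (lower_block i1 ba be_hat br 0) in
  (* conclusions *)
  (forall u0 : F, lower_block i1 ba be_hat br u0 = row_mx (A21 - u0%:M) A22)
  /\ invmx A12 *m A11 = col_mx C13' C23'
  /\ A21 - A22 *m (invmx A12 *m A11)
     = action_mx i1 ba br C23'.
Proof.
move=> i1 sys uniq_ba _ [uniq_br Br] _ _ uniq_bhe bhe_Be _ Chat A12 A11 _ _.
case=> P [_ gauss_jordan] A21 A22.
have uniq_b : uniq (ba ++ be_hat ++ br).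
  have bhe_nba : ~~ has (in_mem^~ (mem ba)) be_hat by apply/hasPn => mo /bhe_Be/and3P[].
  have br_nba : ~~ has (in_mem^~ (mem ba)) br by apply/hasPn => mo; rewrite Br => /andP[].
  have br_nbhe : ~~ has (in_mem^~ (mem be_hat)) br.
    by apply/hasPn => mo br_mo; apply/negP => /bhe_Be/and3P[_ /negP].
  by rewrite !cat_uniq has_cat negb_or uniq_ba uniq_bhe uniq_br bhe_nba br_nba br_nbhe.
have GJ : invmx A12 *m A11 = col_mx C13' C23'.
  by apply: (@invmx_mul_row_reduced _ _ _ P); rewrite hsubmxK.
split; first exact: lower_block_shift.
by split; last rewrite GJ schur_lower_block.
Qed.
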